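(* For every $n\ge1$, the number $r_{n+1}$ of rooted duplication trees with $n+1$ leaves equals the number $\sigma_n$ of counter arrays of length $n$.
   Context: A counter array of length $n$ is an integer array $(a_1,\dots,a_n)$ with $1\le a_i\le i$ for all $i$ and $a_{i+1}\ge a_i-1$ for all $1\le i<n$; $\sigma_n$ denotes the number of such arrays. Rooted duplication trees: start with the ordered array $(g)$ consisting of a single gene (the root). A tandem-duplication event applied to a current ordered array of genes $(g_1,\dots,g_m)$ chooses a contiguous block $g_i,\dots,g_{i+\ell-1}$, creates for each $g_j$ in the block two new genes $\mathrm{lc}(g_j)$, $\mathrm{rc}(g_j)$ (its left and right child), and replaces the block by $\mathrm{lc}(g_i),\dots,\mathrm{lc}(g_{i+\ell-1}),\mathrm{rc}(g_i),\dots,\mathrm{rc}(g_{i+\ell-1})$. A rooted duplication tree is a rooted binary tree (each internal node has a left and a right child) with the linear order on its leaves, arising from the single root by a finite sequence of such events (leaves are the genes of the final array, in that array's order). Trees are identified if isomorphic as rooted binary trees preserving left/right children and leaf order; $r_m$ counts the classes with $m$ leaves. *)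

From mathcomp Require Import all_boot.
Set Implicit Arguments. Unset Strict Implicit. Unset Printing Implicit Defensive.

(* A sequence a = (a_1,...,a_n) (stored 0-indexed: a_i = nth 0 a (i-1)) is a
   counter array of length n iff 1 <= a_i <= i and a_{i+1} >= a_i - 1. *)
Definition counter_array (n : nat) (a : seq nat) : bool :=
  [&& size a == n,
      all (fun i => (0 < nth 0 a i) && (nth 0 a i <= i.+1)) (iota 0 n)
    & all (fun i => (nth 0 a i).-1 <= nth 0 a i.+1) (iota 0 n.-1)].

(* sigma n = number of counter arrays of length n; every entry lies in
   {0..n}, so they are enumerated among n-tuples over 'I_(n.+1). *)
Definition sigma (n : nat) : nat :=
  #|[set t : n.-tuple 'I_n.+1 | counter_array n (map (@nat_of_ord _) t)]|.

(* A gene (node of the rooted binary tree) is encoded by its path from the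
   root: false = left child (lc), true = right child (rc).  The root is [::]. *)
Definition gene := seq bool.
Definition lc (g : gene) : gene := rcons g false.
Definition rc (g : gene) : gene := rcons g true.

Definition dup_event (a b : seq gene) : Prop :=
  exists i l, 0 < l /\ i + l <= size a /\
    let blk := take l (drop i a) in
    b = take i a ++ map lc blk ++ map rc blk ++ drop (i + l) a.

Inductive reachable : seq gene -> Prop :=
| reach_root : reachable [:: [::]]
| reach_step a b : reachable a -> dup_event a b -> reachable b.

(* A rooted duplication tree up to isomorphism (preserving left/right
   children and leaf order) is exactly determined by its final leaf array,
   written as root paths: the tree is the prefix closure of the leaves and
   the leaf order is the order of the array.  Hence the classes with m
   leaves are in bijection with the reachable arrays of size m. *)
Definition dup_tree_class (m : nat) (a : seq gene) : Prop :=
  reachable a /\ size a = m.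

From mathcomp Require Import all_boot zify.
From Stdlib Require Import Classical.
Set Implicit Arguments. Unset Strict Implicit. Unset Printing Implicit Defensive.

(* In a reachable array the genes are distinct and none is a prefix of
   another.  Consequently two visible duplication events (factors of the form
   lc G ++ rc G) either coincide or are disjoint, and every visible event can
   be undone within reachable arrays.  Label an array by one more than the
   start of its rightmost event (0 if there is none).  A reachable array with
   m+2 genes and label k arises from exactly one with m+1 genes and label j,
   where max(1, j-1) <= k <= m+1: for k = j-1 the rightmost event is widened by
   the gene just before it, otherwise the gene at position k-1 is duplicated
   alone.  Counter arrays of length m+1 arise from those of length m by
   appending a last entry k under the same constraint relative to the previous
   last entry, so both families are the levels of one generating tree. *)

Definition succ_labels (j m : nat) : seq nat :=
  iota (maxn 1 j.-1) (m.+1 - maxn 1 j.-1).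

Lemma mem_succ_labels j m k : (k \in succ_labels j m) = (maxn 1 j.-1 <= k <= m).
Proof. by rewrite mem_iota; apply/idP/idP => /andP [? ?]; apply/andP; split; lia. Qed.

Section GeneratingTree.

Variables (T : Type) (child : T -> nat -> nat -> T) (root : T).

Fixpoint grow (m : nat) : seq (T * nat) :=
  if m is m'.+1 then [seq (child x.1 x.2 k, k) | x <- grow m', k <- succ_labels x.2 m]
  else [:: (root, 0)].

End GeneratingTree.

Lemma grow_labels (T1 T2 : Type) (child1 : T1 -> nat -> nat -> T1)
    (child2 : T2 -> nat -> nat -> T2) root1 root2 m :
  map snd (grow child1 root1 m) = map snd (grow child2 root2 m).
Proof.
elim: m => //= m IHm; rewrite !map_allpairs.
have labels T' (c : T' -> nat -> nat -> T') r :
    [seq (c x.1 x.2 k, k).2 | x <- grow c r m, k <- succ_labels x.2 m.+1]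
    = [seq k | j <- map snd (grow c r m), k <- succ_labels j m.+1].
  by rewrite allpairs_mapl.
by rewrite !labels IHm.
Qed.

Section GrowEq.

Variables (T : eqType) (child : T -> nat -> nat -> T) (root : T).
Local Notation grow := (grow child root).

Lemma mem_grow_succ m y k :
  (y, k) \in grow m.+1 <->
  exists x j, [/\ (x, j) \in grow m, k \in succ_labels j m.+1 & y = child x j k].
Proof.
split.
- by case/allpairsPdep => -[x j] [k' [xj kk' [-> ->]]]; exists x, j.
- by case=> x [j [xj kj ->]]; apply/allpairsPdep; exists (x, j), k.
Qed.

Lemma grow_uniq_succ m :
  (forall x1 j1 x2 j2 k, (x1, j1) \in grow m -> (x2, j2) \in grow m ->
     k \in succ_labels j1 m.+1 -> k \in succ_labels j2 m.+1 ->
     child x1 j1 k = child x2 j2 k -> (x1, j1) = (x2, j2)) ->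
  uniq (grow m) -> uniq (grow m.+1).
Proof.
move=> child_inj Um; apply: allpairs_uniq_dep => // [x _|]; first exact: iota_uniq.
move=> p1 p2 /allpairsPdep [[x1 j1] [k1 [h1 hk1 ->]]].
move=> /allpairsPdep [[x2 j2] [k2 [h2 hk2 ->]]] /= [eq_child eq_k].
subst k2; by case: (child_inj _ _ _ _ _ h1 h2 hk1 hk2 eq_child) => <- <-.
Qed.

End GrowEq.

Lemma lc_inj : injective lc. Proof. exact: rcons_injl. Qed.
Lemma rc_inj : injective rc. Proof. exact: rcons_injl. Qed.
Lemma lc_neq_rc (g h : gene) : lc g <> rc h. Proof. by move=> /rcons_inj []. Qed.

Lemma catI (T : Type) : right_injective (@cat T).
Proof. by move=> s t1 t2; elim: s => //= x s IHs [/IHs]. Qed.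

Lemma prefix_cat_eq (T : eqType) (s1 s2 t1 t2 : seq T) :
  size s1 <= size s2 -> s1 ++ t1 = s2 ++ t2 -> prefix s1 s2.
Proof.
move=> le12 eq12; rewrite prefixE.
by rewrite -(takel_cat t2 le12) -eq12 take_size_cat.
Qed.

Lemma prefix_rconsr (T : eqType) (s t : seq T) x :
  prefix s (rcons t x) = (s == rcons t x) || prefix s t.
Proof.
apply/idP/orP => [/prefixP [z]|[/eqP -> | st]].
- case/lastP: z => [|z y]; first by rewrite cats0 => ->; left.
  by rewrite -rcons_cat => /rcons_inj [-> _]; right; apply: prefix_prefix.
- exact: prefix_refl.
- exact: prefix_trans st (prefix_rcons t x).
Qed.

Definition duplicate (x G y : seq gene) : seq gene := x ++ map lc G ++ map rc G ++ y.

Lemma size_duplicate (x G y : seq gene) : size (duplicate x G y) = size x + 2 * size G + size y.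
Proof. rewrite /duplicate !size_cat !size_map; lia. Qed.

Lemma dup_event_duplicate (x G y : seq gene) : G != [::] -> dup_event (x ++ G ++ y) (duplicate x G y).
Proof.
move=> nzG; exists (size x), (size G); split; [by case: G nzG | split].
- by rewrite !size_cat; lia.
- by rewrite /= drop_size_cat // !take_size_cat // (catA x G y) drop_size_cat ?size_cat.
Qed.

Lemma dup_eventP (a b : seq gene) :
  dup_event a b ->
  exists x G y : seq gene, [/\ G != [::], a = x ++ G ++ y & b = duplicate x G y].
Proof.
case=> i [l [l_gt0 [il_le ->]]].
exists (take i a), (take l (drop i a)), (drop (i + l) a); split => //.
- have : 0 < size (take l (drop i a)) by rewrite size_take size_drop; case: (ltnP l); lia.
  by rewrite lt0n size_eq0.
- by rewrite addnC -drop_drop !cat_take_drop.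
Qed.

Lemma nth_duplicate_lc (x G y : seq gene) t : t < size G ->
  nth [::] (duplicate x G y) (size x + t) = lc (nth [::] G t).
Proof.
move=> tG; rewrite nth_cat ltnNge leq_addr addKn nth_cat size_map tG.
exact: nth_map.
Qed.

Lemma nth_duplicate_rc (x G y : seq gene) t : t < size G ->
  nth [::] (duplicate x G y) (size x + size G + t) = rc (nth [::] G t).
Proof.
move=> tG; rewrite -addnA nth_cat ltnNge leq_addr addKn.
by rewrite nth_cat size_map ltnNge leq_addr addKn /= nth_cat size_map tG (nth_map [::]).
Qed.

Lemma mem_children (G : seq gene) (z : gene) :
  z \in map lc G ++ map rc G -> exists2 g, g \in G & exists c, z = rcons g c.
Proof.
by rewrite mem_cat => /orP [] /mapP [g gG ->]; exists g => //; [exists false | exists true].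
Qed.

Definition prefix_free (b : seq gene) := {in b &, forall g h, prefix g h -> g = h}.

Section DuplicateInvariant.

Variables (x G y : seq gene).
Hypotheses (U : uniq (x ++ G ++ y)) (P : prefix_free (x ++ G ++ y)).

Let old_G (g : gene) : g \in G -> g \in x ++ G ++ y.
Proof. by move=> gG; rewrite !mem_cat gG orbT. Qed.

Let old_xy (z : gene) : z \in x ++ y -> z \in x ++ G ++ y.
Proof. by rewrite !mem_cat => /orP [] ->; rewrite ?orbT. Qed.

Let G_notin_xy (g : gene) : g \in G -> g \notin x ++ y.
Proof.
have := U; rewrite (perm_uniq (permEl (perm_catCA x G y))) cat_uniq.
by case/and3P => _ /hasPn disj _ gG; apply: contraL gG; apply: disj.
Qed.

Let child_notin_xy (g : gene) c : g \in G -> rcons g c \notin x ++ y.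
Proof.
move=> gG; apply/negP => /old_xy gc.
have /(congr1 size) := P (old_G gG) gc (prefix_rcons g c).
by rewrite size_rcons; lia.
Qed.

Lemma duplicate_uniq : uniq (duplicate x G y).
Proof.
move: U; rewrite (perm_uniq (permEl (perm_catCA x G y))) cat_uniq => /and3P [UG _ Uxy].
rewrite /duplicate [map lc G ++ _]catA (perm_uniq (permEl (perm_catCA x _ y))).
rewrite cat_uniq Uxy andbT cat_uniq (map_inj_uniq lc_inj) (map_inj_uniq rc_inj) UG !andbT.
apply/andP; split.
- by apply/hasPn => _ /mapP [g _ ->]; apply/mapP => -[g' _ /esym/lc_neq_rc].
- apply/hasPn => z zxy; apply: contraL zxy => /mem_children [g gG [c ->]].
  exact: child_notin_xy.
Qed.

Lemma duplicate_prefix_free : prefix_free (duplicate x G y).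
Proof.
have mem_dup z : z \in duplicate x G y ->
    z \in x ++ y \/ exists2 g, g \in G & exists c, z = rcons g c.
  rewrite /duplicate [map lc G ++ _]catA (perm_mem (permEl (perm_catCA x _ y))).
  by rewrite mem_cat => /orP [/mem_children|]; [right | left].
have rcons_not_prefix (g : gene) c : ~~ prefix (rcons g c) g.
  by apply: contraTN isT => /size_prefix; rewrite size_rcons ltnn.
move=> a c /mem_dup Ha /mem_dup [c_old | [g' g'G [c' ->]]] ac.
- case: Ha ac => [a_old | [g gG [b ->]]] ac; first exact: P (old_xy a_old) (old_xy c_old) ac.
  have gc : g = c := P (old_G gG) (old_xy c_old) (prefix_trans (prefix_rcons g b) ac).
  by move: ac; rewrite -gc (negbTE (rcons_not_prefix _ _)).
- move: ac; rewrite prefix_rconsr => /orP [/eqP -> // | ag'].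
  case: Ha ag' => [a_old | [g gG [b ->]]] ag'.
  + have ag'_eq := P (old_xy a_old) (old_G g'G) ag'.
    by move: (G_notin_xy g'G); rewrite -ag'_eq a_old.
  + have gg' : g = g' := P (old_G gG) (old_G g'G) (prefix_trans (prefix_rcons g b) ag').
    by move: ag'; rewrite -gg' (negbTE (rcons_not_prefix _ _)).
Qed.

End DuplicateInvariant.

Lemma reachable_uniq_prefix_free (b : seq gene) : reachable b -> uniq b /\ prefix_free b.
Proof.
elim=> [|a {}b _ [Ua Pa] /dup_eventP [x [G [y [_ Ea ->]]]]].
  by split=> // g h; rewrite !inE => /eqP -> /eqP ->.
by rewrite Ea in Ua Pa; split; [exact: duplicate_uniq | exact: duplicate_prefix_free].
Qed.

Lemma reachable_uniq (b : seq gene) : reachable b -> uniq b.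
Proof. by case/reachable_uniq_prefix_free. Qed.

Lemma duplicate_overlap (x G y u B w : seq gene) :
  uniq (duplicate x G y) -> duplicate x G y = duplicate u B w ->
  G != [::] -> B != [::] -> size x <= size u < size x + 2 * size G ->
  [/\ x = u, G = B & y = w].
Proof.
move=> Ub Eb nzG nzB /andP [le_xu lt_u].
(* Position [size u] holds [lc (B 0)], so it lies in the left half of the first
   event; the two occurrences of [rc (B 0)] then force [size G = size B], and a
   shift [d > 0] would put [rc (G 0)] inside the left half of the second event. *)
have sG : 0 < size G by rewrite lt0n size_eq0.
have sB : 0 < size B by rewrite lt0n size_eq0.
have size_b := size_duplicate x G y; have := size_duplicate u B w; rewrite -Eb => size_b'.
set d := size u - size x; have Eu : size u = size x + d by lia.
have b_u : nth [::] (duplicate x G y) (size u) = lc (nth [::] B 0).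
  by rewrite Eb -[size u]addn0 nth_duplicate_lc.
have dG : d < size G.
  rewrite ltnNge; apply/negP => Gd.
  have : nth [::] (duplicate x G y) (size u) = rc (nth [::] G (d - size G)).
    by rewrite -(@nth_duplicate_rc x _ y); [congr nth; lia | lia].
  by rewrite b_u => /lc_neq_rc.
have GB : nth [::] G d = nth [::] B 0 by apply: lc_inj; rewrite -b_u Eu nth_duplicate_lc.
have size_GB : size G = size B.
  have r1 : nth [::] (duplicate x G y) (size u + size G) = rc (nth [::] B 0).
    by rewrite -GB -(@nth_duplicate_rc x _ y) //; congr nth; lia.
  have r2 : nth [::] (duplicate x G y) (size u + size B) = rc (nth [::] B 0).
    by rewrite Eb -[_ + size B]addn0 nth_duplicate_rc.
  have lt1 : size u + size G < size (duplicate x G y) by lia.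
  have lt2 : size u + size B < size (duplicate x G y) by lia.
  have := index_uniq [::] lt2 Ub; rewrite r2 -r1 index_uniq //.
  by move/addnI.
have d0 : d = 0.
  apply/eqP; apply: contraT; rewrite -lt0n => d_gt0.
  have : nth [::] (duplicate x G y) (size x + size G) = lc (nth [::] B (size G - d)).
    by rewrite Eb -(@nth_duplicate_lc u _ w); [congr nth; lia | lia].
  by rewrite -[_ + size G]addn0 nth_duplicate_rc // => /esym/lc_neq_rc.
have eq_xu : size x = size u by lia.
have eq_lc : size (map lc G) = size (map lc B) by rewrite !size_map.
move/eqP: Eb; rewrite /duplicate (eqseq_cat _ _ eq_xu) => /andP [/eqP <-].
rewrite (eqseq_cat _ _ eq_lc) => /andP [/eqP /(inj_map lc_inj) <-].
by move=> /eqP /catI ->.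
Qed.

Lemma duplicate_eq_cases (x G y u B w : seq gene) :
  uniq (duplicate x G y) -> duplicate x G y = duplicate u B w ->
  G != [::] -> B != [::] ->
  [\/ [/\ x = u, G = B & y = w],
      exists z, u = x ++ map lc G ++ map rc G ++ z
    | exists z, x = u ++ map lc B ++ map rc B ++ z].
Proof.
wlog le_xu : x G y u B w / size x <= size u.
  move=> wlog_le Ub Eb nzG nzB; case: (leqP (size x) (size u)) => [le | /ltnW le].
    exact: wlog_le.
  rewrite Eb in Ub; case: (wlog_le u B w x G y le Ub (esym Eb) nzB nzG).
  - by case=> -> -> ->; apply: Or31.
  - by move=> ?; apply: Or33.
  - by move=> ?; apply: Or32.
move=> Ub Eb nzG nzB; case: (ltnP (size u) (size x + 2 * size G)) => lt_u.
  by apply: Or31; apply: duplicate_overlap; rewrite ?le_xu.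
apply: Or32; have /prefixP [z ->] : prefix (x ++ map lc G ++ map rc G) u.
  apply: (@prefix_cat_eq _ _ _ y (map lc B ++ map rc B ++ w)); last by rewrite -!catA.
  by rewrite !size_cat !size_map addnn -mul2n.
by exists z; rewrite -!catA.
Qed.

Lemma reachable_undo (b x G y : seq gene) :
  reachable b -> G != [::] -> b = duplicate x G y -> reachable (x ++ G ++ y).
Proof.
move=> Rb; elim: Rb x G y => [|a {}b Ra IHa step] x G y nzG Eb.
  have := size_duplicate x G y; rewrite -Eb; case: G nzG {Eb} => //= *; lia.
have Ub := reachable_uniq (reach_step Ra step); rewrite Eb in Ub.
case/dup_eventP: step => u [B [w [nzB Ea Eb']]]; rewrite Eb' in Eb; symmetry in Eb.
case: (duplicate_eq_cases Ub Eb nzG nzB) => [[-> -> ->] | [z Eu] | [z Ex]].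
- by rewrite -Ea.
- have -> : y = z ++ map lc B ++ map rc B ++ w.
    by move: Eb; rewrite Eu /duplicate -!catA => /catI/catI/catI.
  have -> : x ++ G ++ z ++ map lc B ++ map rc B ++ w = duplicate (x ++ G ++ z) B w.
    by rewrite /duplicate -!catA.
  apply: reach_step (dup_event_duplicate _ _ nzB); rewrite -!catA.
  by apply: IHa => //; rewrite Ea Eu /duplicate -!catA.
- have Ew : w = z ++ map lc G ++ map rc G ++ y.
    by move: Eb; rewrite Ex /duplicate -!catA => /catI/catI/catI.
  have -> : x ++ G ++ y = duplicate u B (z ++ G ++ y) by rewrite Ex /duplicate -!catA.
  apply: reach_step (dup_event_duplicate _ _ nzB).
  have := IHa (u ++ B ++ z) G y nzG; rewrite -!catA; apply.
  by rewrite Ea Ew /duplicate -!catA.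
Qed.

Lemma ex_succ_max (P : nat -> Prop) (N : nat) : (forall p, P p -> p < N) ->
  exists j, (forall p, P p -> p < j) /\ (0 < j -> P j.-1).
Proof.
elim: N => [|N IHN] ltN; first by exists 0; split => // p /ltN.
have [PN | nPN] := classic (P N); first by exists N.+1.
apply: IHN => p Pp; have := ltN p Pp; rewrite ltnS leq_eqVlt => /orP [/eqP eq_pN|//].
by rewrite eq_pN in Pp.
Qed.

Definition event_at (b : seq gene) (p : nat) : Prop :=
  exists x G y : seq gene, [/\ size x = p, G != [::] & b = duplicate x G y].

Definition event_free (y : seq gene) : Prop :=
  forall z G w : seq gene, G != [::] -> y <> duplicate z G w.

Lemma event_at_size (b : seq gene) p : event_at b p -> p.+2 <= size b.
Proof. by case=> x [[|g G] [y [<- // _ ->]]]; rewrite size_duplicate /=; lia. Qed.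

Lemma event_free_cat (x y : seq gene) p : event_free y -> event_at (x ++ y) p -> p < size x.
Proof.
move=> Fy [u [G [w [<- nzG Exy]]]]; rewrite ltnNge; apply/negP => le_xu.
have /prefixP [z Eu] := prefix_cat_eq le_xu Exy.
by apply: (Fy z G w nzG); move: Exy; rewrite Eu /duplicate -catA => /catI.
Qed.

(* [j] is one more than the start of the rightmost event of [b], and [0] if
   [b] has no event. *)
Definition rightmost_event (b : seq gene) (j : nat) : Prop :=
  (forall p, event_at b p -> p < j) /\ (0 < j -> event_at b j.-1).

Lemma rightmost_event_inj (b : seq gene) j1 j2 :
  rightmost_event b j1 -> rightmost_event b j2 -> j1 = j2.
Proof.
case=> [lt1 ev1] [lt2 ev2]; apply/eqP; rewrite eqn_leq; apply/andP; split.
- by case: (posnP j1) => [-> // | /ev1/lt2]; lia.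
- by case: (posnP j2) => [-> // | /ev2/lt1]; lia.
Qed.

Lemma rightmost_event_exists (b : seq gene) : exists j, rightmost_event b j.
Proof. by apply: (@ex_succ_max _ (size b)) => p /event_at_size; lia. Qed.

Lemma rightmost_event_free (b x y : seq gene) j :
  rightmost_event b j -> b = x ++ y -> j <= size x -> event_free y.
Proof.
move=> [ltj _] Eb le_j z G w nzG Ey.
have : event_at b (size x + size z).
  by exists (x ++ z), G, w; rewrite size_cat Eb Ey /duplicate -!catA.
by move/ltj; lia.
Qed.

Lemma rightmost_event_duplicate (x G y : seq gene) :
  uniq (duplicate x G y) -> G != [::] -> event_free y ->
  rightmost_event (duplicate x G y) (size x).+1.
Proof.
move=> Ub nzG Fy; split=> [p [u [B [w [<- nzB Eb]]]] | _]; last by exists x, G, y.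
case: (duplicate_eq_cases Ub Eb nzG nzB) => [[<- _ _] // | [z Eu] | [z ->]].
- by case: (Fy z B w nzB); move: Eb; rewrite Eu /duplicate -!catA => /catI/catI/catI.
- by rewrite !size_cat; lia.
Qed.

Definition gene_parent (g : gene) : gene := take (size g).-1 g.

Lemma gene_parent_lc (g : gene) : gene_parent (lc g) = g.
Proof. by rewrite /gene_parent /lc size_rcons -cats1 take_size_cat. Qed.

(* Half-length of the event starting at position [k] of [b]: the gene [lc g]
   at [k] is matched by [rc g] at [k + event_half b k]. *)
Definition event_half (b : seq gene) (k : nat) : nat :=
  index (rc (gene_parent (nth [::] b k))) b - k.

(* From an array whose label is [j] (see [rightmost_event]), build the one with
   label [k]: for [k < j] the rightmost event, which then starts at [k], is
   widened by the gene at [k - 1]; otherwise that gene is duplicated alone. *)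
Definition extend_array (b : seq gene) (j k : nat) : seq gene :=
  let h := nth [::] b k.-1 in
  let l := if k < j then event_half b k else 0 in
  take k.-1 b ++ lc h :: take l (drop k b) ++ rc h :: drop (k + l) b.

Lemma extend_array_eq (b x G y : seq gene) h j k :
  uniq b -> b = x ++ h :: map lc G ++ map rc G ++ y -> size x = k.-1 -> 0 < k ->
  (k < j) = (G != [::]) -> extend_array b j k = duplicate x (h :: G) y.
Proof.
move=> Ub Eb sx k_gt0 kj.
have sxh : size (rcons x h) = k by rewrite size_rcons sx prednK.
have Eb' : b = rcons x h ++ map lc G ++ map rc G ++ y by rewrite cat_rcons.
have drop_k : drop k b = map lc G ++ map rc G ++ y by rewrite Eb' drop_size_cat.
rewrite /extend_array kj drop_k (_ : nth [::] b k.-1 = h); last first.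
  by rewrite Eb nth_cat sx ltnn subnn.
rewrite (_ : take k.-1 b = x); last by rewrite Eb -sx take_size_cat.
case: G Eb' drop_k {Eb kj} => [|g G] Eb' drop_k; first by rewrite /= take0 addn0 drop_k.
have half : event_half b k = (size G).+1.
  have b_k : nth [::] b k = lc g.
    by rewrite Eb' -sxh -[size _]addn0 (@nth_duplicate_lc _ (g :: G)).
  have b_rc : nth [::] b (k + (size G).+1) = rc g.
    by rewrite Eb' -sxh -[_ + _.+1]addn0 (@nth_duplicate_rc _ (g :: G)).
  have lt_rc : k + (size G).+1 < size b.
    by rewrite Eb' !size_cat !size_map /= sxh; lia.
  by rewrite /event_half b_k gene_parent_lc -b_rc index_uniq //; lia.
rewrite half /= take_size_cat ?size_map // addnC -drop_drop drop_k.
by rewrite -cat_cons drop_size_cat ?size_map.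
Qed.

Lemma reachable_widen (x G y : seq gene) h :
  reachable (x ++ h :: map lc G ++ map rc G ++ y) -> reachable (duplicate x (h :: G) y).
Proof.
move=> R; apply: reach_step (@dup_event_duplicate x (h :: G) y isT).
case: (eqVneq G [::]) R => [-> // | nzG] R.
by rewrite -cat_rcons; apply: (reachable_undo R nzG); rewrite /duplicate cat_rcons.
Qed.

Lemma reachable_narrow (x G y : seq gene) h :
  reachable (duplicate x (h :: G) y) -> reachable (x ++ h :: map lc G ++ map rc G ++ y).
Proof.
move=> R; have {}R := reachable_undo R (isT : h :: G != [::]) erefl.
case: (eqVneq G [::]) R => [-> // | nzG] R.
rewrite -cat_rcons; apply: reach_step (dup_event_duplicate _ _ nzG).
by rewrite cat_rcons.
Qed.

Lemma reachable_event (b : seq gene) : reachable b -> 1 < size b -> exists p, event_at b p.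
Proof.
move=> Rb; case: b / Rb => [// | a b _ /dup_eventP [x [G [y [nzG _ ->]]]]] _.
by exists (size x), x, G, y.
Qed.

Lemma reachable_size1 (b : seq gene) : reachable b -> size b = 1 -> b = [:: [::]].
Proof.
move=> Rb; case: b / Rb => [// | a b _ /dup_eventP [x [G [y [nzG _ ->]]]]].
by rewrite size_duplicate; case: G nzG => //= *; lia.
Qed.

Lemma rightmost_event_cat (x y : seq gene) j :
  event_free y -> rightmost_event (x ++ y) j -> j <= size x.
Proof.
move=> Fy [_ ev]; case: (posnP j) => [-> // | /ev /(event_free_cat Fy)].
by case: j {ev}; lia.
Qed.

Lemma extend_array_shape (b : seq gene) j k :
  uniq b -> rightmost_event b j -> maxn 1 j.-1 <= k <= size b ->
  exists x h G y, [/\ size x = k.-1, b = x ++ h :: map lc G ++ map rc G ++ y,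
                      extend_array b j k = duplicate x (h :: G) y & event_free y].
Proof.
move=> Ub bj /andP [lo hi]; have k_gt0 : 0 < k by lia.
case: (ltnP k j) => kj.
- have [x1 [G [y [sx1 nzG Eb]]]] := bj.2 (leq_ltn_trans (leq0n k) kj).
  case/lastP: x1 sx1 Eb => [/= | x h] sx1 Eb; first by lia.
  have Eb' : b = x ++ h :: map lc G ++ map rc G ++ y by rewrite Eb /duplicate cat_rcons.
  have sx : size x = k.-1 by move: sx1; rewrite size_rcons; lia.
  exists x, h, G, y; split => //.
  + by apply: extend_array_eq; rewrite // kj nzG.
  + apply: (rightmost_event_free bj (_ : b = (rcons x h ++ map lc G ++ map rc G) ++ y)).
      by rewrite Eb /duplicate -!catA.
    have sG : 0 < size G by rewrite lt0n size_eq0.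
    by rewrite !size_cat !size_map size_rcons sx; lia.
- have lt_b : k.-1 < size b by lia.
  have Eb : b = take k.-1 b ++ nth [::] b k.-1 :: drop k b.
    by rewrite -{3}(prednK k_gt0) -drop_nth // cat_take_drop.
  have sx : size (take k.-1 b) = k.-1 by rewrite size_take lt_b.
  exists (take k.-1 b), (nth [::] b k.-1), [::], (drop k b); split => //.
  + by apply: extend_array_eq; rewrite // ltnNge kj.
  + apply: (rightmost_event_free bj (_ : b = rcons (take k.-1 b) (nth [::] b k.-1) ++ drop k b)).
      by rewrite cat_rcons.
    by rewrite size_rcons sx prednK.
Qed.

Lemma extend_array_spec (b : seq gene) j k :
  reachable b -> rightmost_event b j -> maxn 1 j.-1 <= k <= size b ->
  [/\ reachable (extend_array b j k), size (extend_array b j k) = (size b).+1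
    & rightmost_event (extend_array b j k) k].
Proof.
move=> Rb bj k_range; have k_gt0 : 0 < k by case/andP: k_range; lia.
have [x [h [G [y [sx Eb -> Fy]]]]] := extend_array_shape (reachable_uniq Rb) bj k_range.
have R' : reachable (duplicate x (h :: G) y) by apply: reachable_widen; rewrite -Eb.
split => //; first by rewrite size_duplicate Eb size_cat /= !size_cat !size_map; lia.
have -> : k = (size x).+1 by rewrite sx prednK.
exact: rightmost_event_duplicate (reachable_uniq R') _ Fy.
Qed.

Lemma extend_array_inj (b1 b2 : seq gene) j1 j2 k :
  reachable b1 -> reachable b2 -> rightmost_event b1 j1 -> rightmost_event b2 j2 ->
  maxn 1 j1.-1 <= k <= size b1 -> maxn 1 j2.-1 <= k <= size b2 ->
  extend_array b1 j1 k = extend_array b2 j2 k -> b1 = b2 /\ j1 = j2.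
Proof.
move=> R1 R2 bj1 bj2 k1 k2 E.
have [x1 [h1 [G1 [y1 [sx1 Eb1 Ex1 _]]]]] := extend_array_shape (reachable_uniq R1) bj1 k1.
have [x2 [h2 [G2 [y2 [sx2 Eb2 Ex2 _]]]]] := extend_array_shape (reachable_uniq R2) bj2 k2.
have [R' _ _] := extend_array_spec R1 bj1 k1.
rewrite Ex1 in R' E; rewrite Ex2 in E.
have sizes : size x1 <= size x2 < size x1 + 2 * size (h1 :: G1).
  by rewrite sx1 sx2 /=; apply/andP; split; lia.
have [ex [eh eG] ey] := duplicate_overlap (reachable_uniq R') E isT isT sizes.
have eb : b1 = b2 by rewrite Eb1 Eb2 ex eh eG ey.
by split => //; rewrite eb in bj1; exact: rightmost_event_inj bj1 bj2.
Qed.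

Lemma rightmost_event_narrow (x G y : seq gene) h j :
  uniq (x ++ h :: map lc G ++ map rc G ++ y) -> event_free y ->
  rightmost_event (x ++ h :: map lc G ++ map rc G ++ y) j ->
  j <= (size x).+2 /\ ((size x).+1 < j) = (G != [::]).
Proof.
move=> U Fy; case: (eqVneq G [::]) U => [-> | nzG] U.
  rewrite /= -cat_rcons => /(rightmost_event_cat Fy); rewrite size_rcons => le_j.
  by split; [lia | apply/negbTE; rewrite -leqNgt].
rewrite -cat_rcons in U *; move: U; rewrite -[_ ++ _]/(duplicate (rcons x h) G y) => U bj.
have := rightmost_event_duplicate U nzG Fy; rewrite size_rcons => bj'.
by rewrite (rightmost_event_inj bj bj') ltnSn.
Qed.

Lemma extend_array_onto (b : seq gene) k :
  reachable b -> 1 < size b -> rightmost_event b k ->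
  exists b' j, [/\ reachable b', rightmost_event b' j,
                   maxn 1 j.-1 <= k <= size b' & extend_array b' j k = b].
Proof.
move=> Rb sb bk.
have k_gt0 : 0 < k by have [p /bk.1] := reachable_event Rb sb; lia.
have [x [G' [y [sx nzG Eb]]]] := bk.2 k_gt0; case: G' nzG Eb => // h G _ Eb.
have Fy : event_free y.
  apply: (rightmost_event_free bk (_ : b = (x ++ map lc (h :: G) ++ map rc (h :: G)) ++ y)).
    by rewrite Eb /duplicate -!catA.
  by rewrite !size_cat !size_map /=; lia.
have R' : reachable (x ++ h :: map lc G ++ map rc G ++ y).
  by apply: reachable_narrow; rewrite -Eb.
have [j bj] := rightmost_event_exists (x ++ h :: map lc G ++ map rc G ++ y).
have [le_j kj] := rightmost_event_narrow (reachable_uniq R') Fy bj.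
exists (x ++ h :: map lc G ++ map rc G ++ y), j; split => //.
- by rewrite size_cat /= !size_cat !size_map; apply/andP; split; lia.
- have kjG : (k < j) = (G != [::]) by rewrite -kj sx prednK.
  by rewrite Eb (extend_array_eq (reachable_uniq R') erefl sx k_gt0 kjG).
Qed.

Definition dup_trees (m : nat) : seq (seq gene * nat) := grow extend_array [:: [::]] m.

Lemma dup_trees_spec m :
  uniq (dup_trees m) /\
  forall b j, (b, j) \in dup_trees m <-> [/\ reachable b, size b = m.+1 & rightmost_event b j].
Proof.
elim: m => [|m [U IH]].
  have root_label : rightmost_event [:: [::]] 0 by split=> // p /event_at_size.
  split=> // b j; rewrite inE; split.
    by case/eqP=> -> ->; split=> //; apply: reach_root.
  case=> Rb sb bj; rewrite (reachable_size1 Rb sb) in bj *.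
  by rewrite (rightmost_event_inj bj root_label).
have in_range b j k : (b, j) \in dup_trees m -> k \in succ_labels j m.+1 ->
    maxn 1 j.-1 <= k <= size b.
  by case/IH=> _ -> _; rewrite mem_succ_labels.
split.
  apply: grow_uniq_succ U => b1 j1 b2 j2 k /[dup] /IH [R1 _ bj1] /in_range r1.
  move=> /[dup] /IH [R2 _ bj2] /in_range r2 /r1 {}r1 /r2 {}r2 E.
  by case: (extend_array_inj R1 R2 bj1 bj2 r1 r2 E) => -> ->.
move=> b k; rewrite mem_grow_succ; split.
  case=> b' [j [/[dup] /IH [R' sb' bj'] /in_range r /r {}r ->]].
  by have [] := extend_array_spec R' bj' r; rewrite sb'.
case=> Rb sb bk; have [|b' [j [R' bj' r Eb]]] := extend_array_onto Rb _ bk; first by rewrite sb.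
have [_ sb' _] := extend_array_spec R' bj' r; rewrite Eb sb in sb'; case: sb' => sb'.
by exists b', j; split => //; [apply/IH | rewrite mem_succ_labels sb'].
Qed.

Lemma counter_array_rcons m a k :
  counter_array m.+1 (rcons a k) =
  [&& counter_array m a, 0 < k <= m.+1 & (last 0 a).-1 <= k].
Proof.
rewrite /counter_array size_rcons eqSS; case: (eqVneq (size a) m) => // sa.
have nth_a i : i < m -> nth 0 (rcons a k) i = nth 0 a i by rewrite nth_rcons sa => ->.
have nth_k : nth 0 (rcons a k) m = k by rewrite nth_rcons sa ltnn eqxx.
have iotaS n : iota 0 n.+1 = iota 0 n ++ [:: n] by rewrite -addn1 iotaD.
have bounds : all (fun i => 0 < nth 0 (rcons a k) i <= i.+1) (iota 0 m.+1)
    = all (fun i => 0 < nth 0 a i <= i.+1) (iota 0 m) && (0 < k <= m.+1).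
  rewrite iotaS all_cat /= nth_k andbT; congr (_ && _).
  by apply: eq_in_all => i; rewrite mem_iota => /andP [_ /nth_a ->].
have steps : all (fun i => (nth 0 (rcons a k) i).-1 <= nth 0 (rcons a k) i.+1) (iota 0 m)
    = all (fun i => (nth 0 a i).-1 <= nth 0 a i.+1) (iota 0 m.-1) && ((last 0 a).-1 <= k).
  case: m sa nth_a nth_k {bounds} => [|m] sa nth_a nth_k; first by case: a sa {nth_a nth_k}.
  rewrite iotaS all_cat /= nth_k nth_a // andbT -nth_last sa /=; congr (_ && _).
  by apply: eq_in_all => i; rewrite mem_iota => /andP [_ lt_i]; rewrite !nth_a //; lia.
by rewrite bounds steps -!andbA; do !bool_congr.
Qed.

Definition counter_arrays (m : nat) : seq (seq nat * nat) :=
  grow (fun a _ k => rcons a k) [::] m.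

Lemma counter_arrays_spec m :
  uniq (counter_arrays m) /\
  forall a j, (a, j) \in counter_arrays m <-> counter_array m a /\ j = last 0 a.
Proof.
elim: m => [|m [U IH]].
  by split=> // a j; rewrite inE; split=> [/eqP [-> ->] | [/and3P [/nilP -> _ _] ->]].
split.
  apply: grow_uniq_succ U => a1 j1 a2 j2 k /IH [_ ->] /IH [_ ->] _ _.
  by move=> /rcons_inj [->].
move=> a k; rewrite mem_grow_succ; split.
  case=> a' [j [/IH [ca' ->] r ->]]; rewrite counter_array_rcons ca' last_rcons.
  by move: r; rewrite mem_succ_labels; split=> //; apply/and3P; split; lia.
case=> + ->; case/lastP: a => [/and3P [] // | a' k'].
rewrite counter_array_rcons last_rcons => /and3P [ca' range_k step_k].
exists a', (last 0 a'); split => //; first exact/IH.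
by rewrite mem_succ_labels; apply/andP; split; lia.
Qed.

Lemma sigma_size n (s : seq (seq nat)) :
  uniq s -> (forall a, a \in s = counter_array n a) -> sigma n = size s.
Proof.
move=> Us mem_s; rewrite /sigma cardE -(size_map (fun t : n.-tuple 'I_n.+1 => map val t)).
apply/perm_size/uniq_perm => //.
  by rewrite map_inj_uniq ?enum_uniq // => t1 t2 /(inj_map val_inj) /val_inj.
move=> a; rewrite mem_s; apply/mapP/idP => [[t] | ca]; first by rewrite mem_enum inE => + ->.
have /eqP sa : size a == n by case/and3P: ca.
have lt_a z : z \in a -> z < n.+1.
  move=> za; have lt_i : index z a < n by rewrite -sa index_mem.
  case/and3P: ca => _ /allP /(_ (index z a)) + _.
  by rewrite mem_iota lt_i nth_index // => /(_ isT) /andP [_]; lia.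
have st : size (map (fun z => inord z : 'I_n.+1) a) == n by rewrite size_map sa.
have val_inord : map val (map (fun z => inord z : 'I_n.+1) a) = a.
  by rewrite -map_comp -[RHS]map_id; apply/eq_in_map => z /lt_a /inordK.
by exists (Tuple st); rewrite /= ?val_inord // mem_enum inE /= val_inord.
Qed.

Unset Implicit Arguments.

Theorem lemma3p2 (n : nat) : 1 <= n ->
  exists s : seq (seq gene),
    [/\ uniq s,
        (forall a : seq gene, a \in s <-> dup_tree_class n.+1 a)
      & size s = sigma n].
Proof.
move=> _; have [Ut mem_t] := dup_trees_spec n; have [Uc mem_c] := counter_arrays_spec n.
exists (map fst (dup_trees n)); split.
- rewrite map_inj_in_uniq // => -[b1 j1] [b2 j2] /mem_t [_ _ bj1] /mem_t [_ _ bj2] /= eb.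
  by rewrite eb in bj1 *; rewrite (rightmost_event_inj bj1 bj2).
- move=> b; split=> [/mapP [[b' j] /mem_t [Rb sb _] ->] // | [Rb sb]].
  by have [j bj] := rightmost_event_exists b; apply/mapP; exists (b, j) => //; apply/mem_t.
- have Ua : uniq (map fst (counter_arrays n)).
    by rewrite map_inj_in_uniq // => -[a1 j1] [a2 j2] /mem_c [_ ->] /mem_c [_ ->] /= ->.
  rewrite (sigma_size Ua); last first.
    move=> a; apply/mapP/idP => [[[a' j] /mem_c [ca _] -> //] | ca].
    by exists (a, last 0 a) => //; apply/mem_c.
  by rewrite !size_map -(size_map snd) (grow_labels _ (fun a _ k => rcons a k) _ [::]) size_map.
Qed.
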